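(* For an integer $g$, let $P_{4,g} = \{(x,y,z)\in\mathbb{R}^3 : 2x-y\ge 0,\ x+y-z\ge 0,\ -x+y+z\ge -1,\ -y+2z\ge -1,\ x+y+z=g,\ x\ge 1,\ y\ge 1,\ z\ge 1\}$. Then: (i) $\#(P_{4,g}\cap\mathbb{Z}^3)$ equals $1,3,4,6,7,9$ for $g=3,4,5,6,7,8$ respectively; (ii) if $g \ge 9$, then $\#(P_{4,g}\cap\mathbb{Z}^3) = \#(T_A(g)\cap\mathbb{Z}^2) + \#(T_B(g)\cap\mathbb{Z}^2) + \#(R(g)\cap\mathbb{Z}^2) - \#(T_C(g)\cap\mathbb{Z}^2)$, where $T_A(g) = \{(x,y)\in\mathbb{R}^2 : 3x+y\ge g,\ x\le \frac{2g+1}{8},\ y\le \frac{g}{2}\}$, $T_B(g) = \{(x,y)\in\mathbb{R}^2 : x+3y\ge g-1,\ x\le \frac{g+1}{2},\ y\le \frac{2g-3}{8}\}$, $R(g) = \{(x,y)\in\mathbb{R}^2 : \frac{2g+1}{8}\le x\le \frac{g+1}{2},\ \frac{2g-3}{8}\le y\le \frac{g}{2}\}$, $T_C(g) = \{(x,y)\in\mathbb{R}^2 : x+y\ge g,\ x\le \frac{g+1}{2},\ y\le \frac{g}{2}\}$. *)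

From HB Require Import structures.
From mathcomp Require Import all_boot all_order all_algebra.
From mathcomp Require Import all_classical all_reals.
Set Implicit Arguments. Unset Strict Implicit. Unset Printing Implicit Defensive.
Import Order.TTheory GRing.Theory Num.Theory.
Local Open Scope ring_scope.
Local Open Scope classical_set_scope.

Definition has_card (T : Type) (A : set T) (n : nat) : Prop :=
  (A #= [set: 'I_n])%card.

Definition lattice3 (R : realType) (A : set (R * R * R)) : set (int * int * int) :=
  [set p | A (p.1.1%:~R, p.1.2%:~R, p.2%:~R)].
Definition lattice2 (R : realType) (A : set (R * R)) : set (int * int) :=
  [set p | A (p.1%:~R, p.2%:~R)].

Definition P4 (R : realType) (g : int) : set (R * R * R) :=
  [set p | let x := p.1.1 in let y := p.1.2 in let z := p.2 in
     [/\ [/\ 2 * x - y >= 0, x + y - z >= 0, - x + y + z >= -1 & - y + 2 * z >= -1],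
         x + y + z = g%:~R & [/\ x >= 1, y >= 1 & z >= 1]]].

Definition TA (R : realType) (g : int) : set (R * R) :=
  [set p | [/\ 3 * p.1 + p.2 >= g%:~R, p.1 <= (2 * g%:~R + 1) / 8 & p.2 <= g%:~R / 2]].
Definition TB (R : realType) (g : int) : set (R * R) :=
  [set p | [/\ p.1 + 3 * p.2 >= g%:~R - 1, p.1 <= (g%:~R + 1) / 2 & p.2 <= (2 * g%:~R - 3) / 8]].
Definition Rg (R : realType) (g : int) : set (R * R) :=
  [set p | [/\ (2 * g%:~R + 1) / 8 <= p.1, p.1 <= (g%:~R + 1) / 2,
              (2 * g%:~R - 3) / 8 <= p.2 & p.2 <= g%:~R / 2]].
Definition TC (R : realType) (g : int) : set (R * R) :=
  [set p | [/\ p.1 + p.2 >= g%:~R, p.1 <= (g%:~R + 1) / 2 & p.2 <= g%:~R / 2]].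

Arguments P4 R g : clear implicits.
Arguments TA R g : clear implicits.
Arguments TB R g : clear implicits.
Arguments Rg R g : clear implicits.
Arguments TC R g : clear implicits.

(* Substituting y = g - x - z projects P_{4,g} bijectively onto the polygon of the
   (x, z)-plane cut out by 3x + z >= g, x + 3z >= g - 1, x <= (g+1)/2, z <= g/2 and
   x + z <= g - 1 (the last one is y >= 1; for g >= 4 the bounds x, z >= 1 are
   implied on lattice points).  Dropping the last constraint, the lattice points
   are those of T_A, T_B and R: the oblique edges meet at ((2g+1)/8, (2g-3)/8),
   whose coordinates have odd numerators, so no lattice point lies on a line
   separating these regions.  The last constraint removes exactly T_C.  Hence
   [P] + [T_C] = [T_A] + [T_B] + [R] at every lattice point, and summing over a
   square containing all regions gives (ii); (i) is a finite computation. *)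

From HB Require Import structures.
From mathcomp Require Import all_boot all_order all_algebra.
From mathcomp Require Import all_classical all_reals.
From mathcomp Require Import zify ring lra.
Set Implicit Arguments.
Unset Strict Implicit.
Unset Printing Implicit Defensive.

Import Order.TTheory GRing.Theory Num.Theory.
Local Open Scope ring_scope.
Local Open Scope classical_set_scope.

Lemma has_card_enum (T : eqType) (x0 : T) (s : seq T) (A : set T) :
  uniq s -> (forall x, A x <-> x \in s) -> has_card A (size s).
Proof.
move=> s_uniq As; rewrite /has_card.
have -> : A = (nth x0 s) @` `I_(size s).
  apply/seteqP; split=> [x /As xs | _ [i /= ltis <-]]; last exact/As/mem_nth.
  by exists (index x s); rewrite /= ?index_mem ?nth_index.
apply: card_eq_trans card_II; apply: inj_card_eq => i j.
by rewrite !in_setE /= => lti ltj /eqP; rewrite nth_uniq // => /eqP.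
Qed.

Lemma has_card_count (T : eqType) (x0 : T) (s : seq T) (p : pred T) (A : set T) :
  uniq s -> (forall x, A x <-> p x && (x \in s)) -> has_card A (count p s).
Proof.
move=> s_uniq Ap; rewrite -size_filter; apply: (has_card_enum x0).
  exact: filter_uniq.
by move=> x; rewrite mem_filter.
Qed.

Lemma eq_in_count_add (T : eqType) (s : seq T) (p q r t u : pred T) :
  (forall x, x \in s -> p x + q x = r x + t x + u x)%N ->
  (count p s + count q s = count r s + count t s + count u s)%N.
Proof.
elim: s => //= x s IHs pq_rtu.
have := IHs (fun y ys => pq_rtu y (mem_behead (s := x :: s) ys)).
have := pq_rtu x (mem_head x s); lia.
Qed.

Definition grid (n : nat) : seq (int * int) :=
  [seq (i%:Z, j%:Z) | i <- iota 0 n.+1, j <- iota 0 n.+1].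

Lemma grid_uniq n : uniq (grid n).
Proof. by apply: allpairs_uniq; rewrite ?iota_uniq // => -[? ?] [? ?] _ _ [-> ->]. Qed.

Lemma mem_grid n a b :
  ((a, b) \in grid n) = [&& 0 <= a, a <= n%:Z, 0 <= b & b <= n%:Z].
Proof.
apply/allpairsP/idP => [[[i j] [iin jin [-> ->]]] | ab_in].
  by move: iin jin; rewrite !mem_iota /=; lia.
by exists (`|a|%N, `|b|%N); rewrite !mem_iota /=; split; [lia | lia | congr pair; lia].
Qed.

Lemma has_card_grid (A : set (int * int)) (p : pred (int * int)) n :
  (forall q, A q <-> p q) -> (forall q, p q -> q \in grid n) ->
  has_card A (count p (grid n)).
Proof.
move=> Ap p_grid; apply: has_card_count (0, 0) _ _ _ (grid_uniq n) _ => q.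
by rewrite Ap; split=> [pq | /andP[]//]; rewrite pq p_grid.
Qed.

Definition P4Z (g : int) (q : int * int) : bool :=
  let x := q.1 in let z := q.2 in let y := g - x - z in
  [&& 0 <= 2 * x - y, 0 <= x + y - z, -1 <= - x + y + z, -1 <= - y + 2 * z,
      1 <= x, 1 <= y & 1 <= z].
Definition TAZ (g : int) (q : int * int) : bool :=
  [&& g <= 3 * q.1 + q.2, 8 * q.1 <= 2 * g + 1 & 2 * q.2 <= g].
Definition TBZ (g : int) (q : int * int) : bool :=
  [&& g - 1 <= q.1 + 3 * q.2, 2 * q.1 <= g + 1 & 8 * q.2 <= 2 * g - 3].
Definition RgZ (g : int) (q : int * int) : bool :=
  [&& 2 * g + 1 <= 8 * q.1, 2 * q.1 <= g + 1, 2 * g - 3 <= 8 * q.2 & 2 * q.2 <= g].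
Definition TCZ (g : int) (q : int * int) : bool :=
  [&& g <= q.1 + q.2, 2 * q.1 <= g + 1 & 2 * q.2 <= g].

Ltac int_to_real R := rewrite -!(ler_int R) ?(rmorphD, rmorphM, rmorphN, rmorphB) /=.

Section LatticePoints.
Variable R : realType.

Lemma card_lattice2_TA (n : nat) :
  has_card (lattice2 (TA R n)) (count (TAZ n) (grid n)).
Proof.
apply: has_card_grid => -[a b]; rewrite /lattice2 /TA /TAZ /=; last by rewrite mem_grid; lia.
int_to_real R; split=> [[? ? ?] | /and3P[? ? ?]]; [apply/and3P; split | split]; lra.
Qed.

Lemma card_lattice2_TB (n : nat) :
  has_card (lattice2 (TB R n)) (count (TBZ n) (grid n)).
Proof.
apply: has_card_grid => -[a b]; rewrite /lattice2 /TB /TBZ /=; last by rewrite mem_grid; lia.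
int_to_real R; split=> [[? ? ?] | /and3P[? ? ?]]; [apply/and3P; split | split]; lra.
Qed.

Lemma card_lattice2_Rg (n : nat) :
  has_card (lattice2 (Rg R n)) (count (RgZ n) (grid n)).
Proof.
apply: has_card_grid => -[a b]; rewrite /lattice2 /Rg /RgZ /=; last by rewrite mem_grid; lia.
int_to_real R; split=> [[? ? ? ?] | /and4P[? ? ? ?]]; [apply/and4P; split | split]; lra.
Qed.

Lemma card_lattice2_TC (n : nat) :
  has_card (lattice2 (TC R n)) (count (TCZ n) (grid n)).
Proof.
apply: has_card_grid => -[a b]; rewrite /lattice2 /TC /TCZ /=; last by rewrite mem_grid; lia.
int_to_real R; split=> [[? ? ?] | /and3P[? ? ?]]; [apply/and3P; split | split]; lra.
Qed.

Lemma lattice3_P4 (g x y z : int) :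
  lattice3 (P4 R g) (x, y, z) <-> y = g - x - z /\ P4Z g (x, z).
Proof.
rewrite /lattice3 /P4 /P4Z /=; split=> [[[? ? ? ?] sum_g [? ? ?]] | [-> Pxz]].
  have y_def : y = g - x - z.
    by apply/eqP; rewrite -(eqr_int R) !rmorphB /=; apply/eqP; lra.
  split=> //; rewrite -y_def; int_to_real R.
  by apply/and5P; split; try apply/and3P; try split; lra.
move: Pxz; int_to_real R => /and5P[? ? ? ? /and3P[? ? ?]].
by split; [split | | split]; lra.
Qed.

Lemma card_lattice3_P4 (n : nat) :
  has_card (lattice3 (P4 R n)) (count (P4Z n) (grid n)).
Proof.
pose lift_y (q : int * int) := (q.1, n%:Z - q.1 - q.2, q.2).
rewrite -size_filter -(size_map lift_y).
apply: has_card_enum (0, 0, 0) _ _ _ _.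
  rewrite map_inj_uniq ?filter_uniq ?grid_uniq //.
  by move=> [a b] [c d] [-> _ ->].
move=> [[x y] z]; rewrite lattice3_P4; split=> [[-> Pxz] | /mapP[[a b]]].
  apply/mapP; exists (x, z) => //; rewrite mem_filter Pxz mem_grid.
  by move: Pxz; rewrite /P4Z /=; lia.
by rewrite mem_filter => /andP[Pab _] [-> -> ->].
Qed.

End LatticePoints.

Lemma P4Z_add_TCZ (g : int) (q : int * int) : 4 <= g ->
  (P4Z g q + TCZ g q = TAZ g q + TBZ g q + RgZ g q)%N.
Proof. by case: q => x z; rewrite /P4Z /TCZ /TAZ /TBZ /RgZ /=; lia. Qed.

Theorem mainTheorem7 (R : realType) :
  [/\ [/\ has_card (lattice3 (P4 R 3)) 1, has_card (lattice3 (P4 R 4)) 3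
          & has_card (lattice3 (P4 R 5)) 4],
      [/\ has_card (lattice3 (P4 R 6)) 6, has_card (lattice3 (P4 R 7)) 7
          & has_card (lattice3 (P4 R 8)) 9] &
      forall g : int, 9 <= g ->
        exists nP nA nB nR nC : nat,
          [/\ has_card (lattice3 (P4 R g)) nP,
              [/\ has_card (lattice2 (TA R g)) nA, has_card (lattice2 (TB R g)) nB,
                  has_card (lattice2 (Rg R g)) nR & has_card (lattice2 (TC R g)) nC] &
              nP%:Z = nA%:Z + nB%:Z + nR%:Z - nC%:Z]].
Proof.
have card_P4_small (n k : nat) :
    count (P4Z n) (grid n) = k -> has_card (lattice3 (P4 R n)) k.
  by move <-; exact: card_lattice3_P4.
split; [by split; apply: card_P4_small | by split; apply: card_P4_small |].
case=> // n n_ge9.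
exists (count (P4Z n) (grid n)), (count (TAZ n) (grid n)), (count (TBZ n) (grid n)),
  (count (RgZ n) (grid n)), (count (TCZ n) (grid n)).
split; first exact: card_lattice3_P4.
  split; [exact: card_lattice2_TA | exact: card_lattice2_TB
         | exact: card_lattice2_Rg | exact: card_lattice2_TC].
have n_ge4 : 4 <= n%:Z by lia.
have := eq_in_count_add (s := grid n) (fun q _ => P4Z_add_TCZ q n_ge4).
by move=> sum_eq; rewrite -!PoszD -sum_eq PoszD addrK.
Qed.
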